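(* Let $\theta\in\mathbb{R}_{\ge0}^V$ be a feasible solution in a general weighted graph on $n=|V|$ vertices. Then $\|W\theta\|_1\ge n+\frac{\|\theta\|_1-\mathsf{OPT}}{\mathsf{OPT}}$.
   Context: $W=(W_{u,v})_{u,v\in V}$ is a symmetric matrix with entries in $[0,1]$ and $W_{v,v}=1$ (the weighted graph). A vector $\theta\in\mathbb{R}_{\ge0}^V$ is feasible if $W\theta\ge\mathbf 1$ coordinatewise. $\mathsf{OPT}=\min\{\|\theta\|_1:\theta\ge0,\ W\theta\ge\mathbf 1\}$. *)

From mathcomp Require Import all_boot all_order all_algebra.
Set Implicit Arguments. Unset Strict Implicit. Unset Printing Implicit Defensive.
Import Order.TTheory GRing.Theory Num.Theory.
Local Open Scope ring_scope.

Definition weighted_graph (R : realFieldType) (n : nat) (W : 'M[R]_n) : Prop :=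
  [/\ W^T = W,
      (forall u v, 0 <= W u v <= 1) &
      (forall v, W v v = 1)].

Definition norm1 (R : realFieldType) (n : nat) (x : 'cV[R]_n) : R :=
  \sum_(i < n) `|x i 0|.

Definition feasible (R : realFieldType) (n : nat) (W : 'M[R]_n) (theta : 'cV[R]_n) : Prop :=
  (forall i, 0 <= theta i 0) /\ (forall i, 1 <= (W *m theta) i 0).

Definition is_OPT (R : realFieldType) (n : nat) (W : 'M[R]_n) (OPT : R) : Prop :=
  (exists2 theta, feasible W theta & norm1 theta = OPT) /\
  (forall theta, feasible W theta -> OPT <= norm1 theta).

(** Let [theta'] be an optimal solution. Feasibility of [theta'] and symmetry of [W] give
    [|theta| <= <theta, W theta'> = <theta', W theta> = OPT + <theta', W theta - 1>],
    and since [W theta - 1 >= 0] and every entry of [theta'] is at most [OPT], the last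
    pairing is at most [OPT (|W theta| - n)]. *)
From mathcomp Require Import all_boot all_order all_algebra.
Set Implicit Arguments. Unset Strict Implicit. Unset Printing Implicit Defensive.
Import Order.TTheory GRing.Theory Num.Theory.
Local Open Scope ring_scope.

Lemma sum_mul_le_mul_sum (R : numDomainType) (I : finType) (a b : I -> R) :
  (forall i, 0 <= a i) -> (forall i, 0 <= b i) ->
  \sum_i a i * b i <= (\sum_i a i) * \sum_i b i.
Proof.
move=> a_ge0 b_ge0; rewrite mulr_suml; apply: ler_sum => i _.
by rewrite ler_wpM2l // (bigD1 i) //= lerDl sumr_ge0.
Qed.

Lemma norm1_nonnegE (R : realFieldType) (n : nat) (x : 'cV[R]_n) :
  (forall i, 0 <= x i 0) -> norm1 x = \sum_i x i 0.
Proof. by move=> x_ge0; apply: eq_bigr => i _; rewrite ger0_norm. Qed.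

Section Feasibility.

Variables (R : realFieldType) (n : nat) (W : 'M[R]_n).
Hypothesis W_sym : W^T = W.

Lemma sym_pairingC (x y : 'cV[R]_n) :
  \sum_i x i 0 * (W *m y) i 0 = \sum_i y i 0 * (W *m x) i 0.
Proof.
have pairingE (u v : 'cV[R]_n) :
    \sum_i u i 0 * (W *m v) i 0 = (u^T *m (W *m v)) 0 0.
  by rewrite [RHS]mxE; apply: eq_bigr => i _; rewrite [u^T _ _]mxE.
have scalar_trE (A : 'M[R]_1) : A 0 0 = A^T 0 0 by rewrite mxE.
by rewrite !pairingE scalar_trE !trmx_mul trmxK W_sym mulmxA.
Qed.

Lemma feasible_ge0_mulmx (theta : 'cV[R]_n) i :
  feasible W theta -> 0 <= (W *m theta) i 0.
Proof. by case=> _ /(_ i); apply: le_trans. Qed.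

Lemma feasible_norm1_mulmx_ge (theta : 'cV[R]_n) :
  feasible W theta -> n%:R <= norm1 (W *m theta).
Proof.
move=> feas; rewrite norm1_nonnegE => [|i]; last exact: feasible_ge0_mulmx.
by rewrite -[n in n%:R]card_ord -sumr_const; apply: ler_sum => i _; case: feas.
Qed.

Lemma feasible_norm1_sub_le (theta theta' : 'cV[R]_n) :
  feasible W theta -> feasible W theta' ->
  norm1 theta - norm1 theta' <= norm1 theta' * (norm1 (W *m theta) - n%:R).
Proof.
move=> feas [th'_ge0 th'_cover]; have [th_ge0 th_cover] := feas.
have excess_ge0 i : 0 <= (W *m theta) i 0 - 1 by rewrite subr_ge0 th_cover.
have excessE : norm1 (W *m theta) - n%:R = \sum_i ((W *m theta) i 0 - 1).
  rewrite sumrB sumr_const card_ord norm1_nonnegE // => i.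
  exact: feasible_ge0_mulmx.
have cover_le : norm1 theta <= \sum_i theta' i 0 * (W *m theta) i 0.
  rewrite norm1_nonnegE // -sym_pairingC; apply: ler_sum => i _.
  by rewrite ler_peMr.
rewrite lerBlDl excessE (norm1_nonnegE th'_ge0); apply: (le_trans cover_le).
apply: le_trans (lerD (lexx _) (sum_mul_le_mul_sum th'_ge0 excess_ge0)).
rewrite -big_split; apply: ler_sum => i _.
by rewrite /= mulrBr mulr1 addrCA subrr addr0.
Qed.

End Feasibility.

Theorem lemma7p5 (R : realFieldType) (n : nat) (W : 'M[R]_n) (OPT : R)
  (theta : 'cV[R]_n) :
  weighted_graph W -> is_OPT W OPT -> feasible W theta ->
  n%:R + (norm1 theta - OPT) / OPT <= norm1 (W *m theta).
Proof.
move=> [W_sym _ _] [[theta' feas' <-] _] feas.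
have [->|norm1_neq0] := eqVneq (norm1 theta') 0.
  by rewrite invr0 mulr0 addr0; apply: feasible_norm1_mulmx_ge feas.
have norm1_gt0 : 0 < norm1 theta' by rewrite lt_def norm1_neq0 sumr_ge0.
rewrite -lerBrDl ler_pdivrMr // mulrC.
exact: feasible_norm1_sub_le.
Qed.
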